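(* Consider the Gaussian mean estimation problem described in the context (with $\mu=0$), fix $i$, and let $\tilde G_i$ be as defined there. For any $\eta\ge0$ and any realization $Z_i^\pm=z_\pm=(z_-,z_+)\in\mathbb R^2$: if $|z_+|\ne|z_-|$, then $$\psi^{*-1}_{\tilde G_i|Z_i^\pm}(\eta,z_\pm)\le B_{z_\pm,n}(\eta):=|z_+^2-z_-^2|\sqrt{2\eta}+\frac{2\sigma^2(z_+-z_-)^2}{n|z_+^2-z_-^2|}\sqrt{2\eta}+\frac{4\max(z_+^2,z_-^2)}{n}$$ (so that $B_{z_\pm,n}(\eta)=|z_+^2-z_-^2|\sqrt{2\eta}+\Theta(1/n)$); and if $|z_+|=|z_-|$, then $$\psi^{*-1}_{\tilde G_i|Z_i^\pm}(\eta,z_\pm)\le4\sigma\sqrt{\frac{2\eta}{n}}\,|z_+|+\frac{4\max(z_+^2,z_-^2)}{n}.$$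
   Context: Gaussian mean estimation: $\mathcal Z=\mathcal W=\mathbb R$, data distribution $\xi=N(\mu,\sigma^2)$ with $\mu=0$ and $\sigma>0$, loss $\ell(w,z)=(w-z)^2$, and the algorithm outputs the average of its $n\ge2$ training samples. Supersample construction: $Z_j^-,Z_j^+$ ($j=1,\dots,n$) are $2n$ i.i.d. samples from $\xi$, $Z_j^\pm=(Z_j^-,Z_j^+)$; $R_1,\dots,R_n$ i.i.d. uniform on $\{-1,1\}$ independent of the samples; $W=\frac1n\sum_j Z_j^{R_j}$ with $Z_j^1=Z_j^+$, $Z_j^{-1}=Z_j^-$. Let $(\tilde W_i,\tilde R_i)$ be a decoupled pair of $(W,R_i)$ conditioned on $Z_i^\pm$: jointly defined with $Z_i^\pm$ so that $(\tilde W_i,Z_i^\pm)\overset{D}{=}(W,Z_i^\pm)$, $(\tilde R_i,Z_i^\pm)\overset{D}{=}(R_i,Z_i^\pm)$, and $\tilde W_i-Z_i^\pm-\tilde R_i$ is a Markov chain; and $\tilde G_i=\tilde R_i(\ell(\tilde W_i,Z_i^-)-\ell(\tilde W_i,Z_i^+))$. For random $F,U$: $\psi_{F|U}(\lambda,u)=\ln\mathbb E[e^{\lambda(F-\mathbb E[F|U=u])}\mid U=u]$ and $\psi^{*-1}_{F|U}(\eta,u)=\inf_{\lambda>0}\frac{\eta+\psi_{F|U}(\lambda,u)}{\lambda}$. *)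

From HB Require Import structures.
From mathcomp Require Import all_boot all_order all_algebra.
From mathcomp Require Import all_classical all_reals all_analysis.
Set Implicit Arguments. Unset Strict Implicit. Unset Printing Implicit Defensive.
Import Order.TTheory GRing.Theory Num.Theory.
Local Open Scope classical_set_scope.
Local Open Scope ring_scope.

Section Gauss.
Context {R : realType}.

Definition loss (w z : R) : R := (w - z) ^+ 2.

(* Z_j^{r} for r in {-1,1} (encoded as a real sign): Z^1 = Z^+, Z^{-1} = Z^- *)
Definition zsel (zm zp r : R) : R := if r == 1 then zp else zm.

(* Conditional law given Z_i^pm = (zm,zp), data distribution N(0,sigma^2):
   W = (1/n)( Z_i^{R_i} + S ) where S = sum_{j<>i} Z_j^{R_j} ~ N(0,(n-1) sigma^2)
   (the Z_j^{R_j}, j<>i, are i.i.d. N(0,sigma^2) and independent of (Z_i^pm,R_i)),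
   R_i uniform on {-1,1}.  The decoupled pair (W~,R~) has W~ with this law and
   R~ uniform on {-1,1}, conditionally independent given Z_i^pm.
   condE n sigma zm zp f = E[ f(R~, W~) | Z_i^pm = (zm,zp) ]. *)
Definition Wval (n : nat) (zm zp r s : R) : R := (zsel zm zp r + s) / n%:R.

Definition condE (n : nat) (sigma zm zp : R) (f : R -> R -> R) : R :=
  (2^-1) * \sum_(rt <- [:: -1; 1])
    ((2^-1) * \sum_(r <- [:: -1; 1])
       (\int[normal_prob 0 (sigma * Num.sqrt (n.-1)%:R)]_(s in [set: R])
           f rt (Wval n zm zp r s))).

Definition Gtil (zm zp rt w : R) : R := rt * (loss w zm - loss w zp).

Definition psiG (n : nat) (sigma zm zp lam : R) : R :=
  let m := condE n sigma zm zp (fun rt w => Gtil zm zp rt w) in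
  ln (condE n sigma zm zp (fun rt w => expR (lam * (Gtil zm zp rt w - m)))).

Definition psi_star_inv (n : nat) (sigma zm zp eta : R) : \bar R :=
  ereal_inf [set ((eta + psiG n sigma zm zp lam) / lam)%:E | lam in [set l : R | 0 < l]].

End Gauss.

From HB Require Import structures.
From mathcomp Require Import all_boot all_order all_algebra.
From mathcomp Require Import all_classical all_reals all_analysis.
From mathcomp Require Import measurable_realfun.
From mathcomp Require Import normal_distribution.
From mathcomp Require Import ring lra.
Import Order.TTheory GRing.Theory Num.Theory.
Local Open Scope classical_set_scope.
Local Open Scope ring_scope.

(** Given Z_i^± = (z_-, z_+), the decoupled output is W~ = (z_R + S) / n with
    S ~ N(0, (n-1) sigma^2), and G~ = R~ (z_+ - z_-) (2 W~ - z_- - z_+) is affine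
    in S with an independent random sign R~.  The sign makes G~ centred, and the
    moment generating function of G~ factors exactly into the Gaussian factor
    exp(2 lam^2 (z_+ - z_-)^2 sigma^2 (n-1) / n^2) and an average of
    cosh(lam (u - (z_+^2 - z_-^2))) with |u| <= 4 max(z_+^2, z_-^2) / n.  Since
    cosh(a + b) <= e^|b| cosh a and cosh a <= exp(a^2 / 2), G~ is sub-Gaussian
    up to a linear term: psi(lam) <= lam^2 v / 2 + lam L with
    v = (z_+^2 - z_-^2)^2 + 4 sigma^2 (z_+ - z_-)^2 / n and L = 4 max(z_+^2, z_-^2) / n,
    whence psi^{*-1}(eta) <= sqrt(2 v eta) + L, and both stated bounds dominate
    sqrt(2 v eta) + L. *)

Section real_inequalities.
Context {R : realType}.

Definition cosh (x : R) : R := (expR x + expR (- x)) / 2.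

Lemma cosh_gt0 (x : R) : 0 < cosh x.
Proof. by rewrite divr_gt0 ?addr_gt0 ?expR_gt0. Qed.

Lemma is_derive_ge0_le (f df : R -> R) (a b : R) : a <= b ->
  (forall x : R, is_derive x (1 : R) f (df x)) -> (forall x, a <= x <= b -> 0 <= df x) ->
  f a <= f b.
Proof.
move=> ab fdf df_ge0.
have [|c] := MVT_segment ab (fun x _ => fdf x).
  by apply: derivable_within_continuous => x _; exact: ex_derive.
rewrite in_itv /= => acb fba.
by rewrite -subr_ge0 fba mulr_ge0 ?df_ge0 ?subr_ge0.
Qed.

Lemma sinh_le_mul_cosh (x : R) : 0 <= x ->
  expR x - expR (- x) <= x * (expR x + expR (- x)).
Proof.
move=> x_ge0; pose f (y : R) : R := y * (expR y + expR (- y)) - (expR y - expR (- y)).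
have : f 0 <= f x.
  apply: (@is_derive_ge0_le _ (fun y => y * (expR y - expR (- y)))) => // [y|y /andP[y_ge0 _]].
    by apply: is_derive_eq; rewrite /GRing.scale /=; ring.
  by rewrite mulr_ge0 // subr_ge0 ler_expR; lra.
by rewrite /f !(mul0r, oppr0, subrr, subr0) subr_ge0.
Qed.

Lemma cosh_le_expR_sqr (x : R) : cosh x <= expR (x ^+ 2 / 2).
Proof.
wlog x_ge0 : x / 0 <= x.
  move=> cosh_le; have [/cosh_le//|/ltW x_le0] := leP 0 x.
  by have := cosh_le (- x); rewrite /cosh oppr_ge0 opprK sqrrN addrC; apply.
pose f (y : R) : R := 2 - (expR y + expR (- y)) * expR (- (y ^+ 2 / 2)).
have : f 0 <= f x.
  apply: (@is_derive_ge0_le _ (fun y => expR (- (y ^+ 2 / 2)) *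
      (y * (expR y + expR (- y)) - (expR y - expR (- y))))) => // [y|y /andP[y_ge0 _]].
    by apply: is_derive_eq; rewrite /GRing.scale /=; field.
  by rewrite mulr_ge0 ?expR_ge0 // subr_ge0 sinh_le_mul_cosh.
rewrite /f /cosh expr0n /= !(mul0r, oppr0, expR0, mulr1) [expR (- (_ / 2))]expRN.
by move=> f_le; rewrite ler_pdivrMr // mulrC -ler_pdivrMr ?expR_gt0 //; lra.
Qed.

Lemma cosh_addr_le (a b : R) : cosh (a + b) <= expR `|b| * cosh a.
Proof.
rewrite /cosh mulrA ler_pM2r // mulrDr -!expRD lerD // ler_expR.
  by rewrite addrC lerD2r ler_norm.
by rewrite opprD addrC lerD2r -normrN ler_norm.
Qed.

Lemma sqrtr_le (a b : R) : 0 <= b -> a <= b ^+ 2 -> Num.sqrt a <= b.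
Proof. by move=> b_ge0 ab; rewrite -(ger0_norm b_ge0) -sqrtr_sqr ler_wsqrtr. Qed.

(* The infimum sqrt (2 a v) is attained at lam = sqrt (2 a / v) only when a and v
   are positive, hence the slack e. *)
Lemma exists_pos_div_add_mul_le (a v e : R) : 0 <= a -> 0 <= v -> 0 < e ->
  exists2 lam, 0 < lam & a / lam + lam * v / 2 <= Num.sqrt (2 * a * v) + e.
Proof.
move=> a_ge0 v_ge0 e_gt0.
have [->|a_neq0] := eqVneq a 0.
  exists (2 * e / (v + 1)); first by rewrite divr_gt0 //; lra.
  rewrite mul0r mulr0 mul0r sqrtr0 !add0r.
  have -> : 2 * e / (v + 1) * v / 2 = e * (v / (v + 1)) by field; rewrite gt_eqF //; lra.
  by rewrite ler_piMr ?ler_pdivrMr; lra.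
have a_gt0 : 0 < a by rewrite lt0r a_neq0.
have [->|v_neq0] := eqVneq v 0.
  exists (a / e); first exact: divr_gt0.
  rewrite invf_div mulrCA divff ?gt_eqF //.
  by rewrite !(mulr0, mul0r, mulr1, addr0, sqrtr0, add0r).
have v_gt0 : 0 < v by rewrite lt0r v_neq0.
set q := Num.sqrt (2 * a * v).
have q_gt0 : 0 < q by rewrite sqrtr_gt0 !mulr_gt0.
have q_sqr : q ^+ 2 = 2 * a * v by rewrite sqr_sqrtr // ltW // !mulr_gt0.
exists (q / v); first by rewrite divr_gt0.
rewrite divfK ?gt_eqF // invf_div.
have -> : a * (v / q) = q / 2.
  transitivity (q ^+ 2 / 2 / q); first by rewrite q_sqr; field; rewrite gt_eqF.
  by field; rewrite gt_eqF.
lra.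
Qed.

Lemma ereal_inf_chernoff_le (psi : R -> R) (eta v L : R) : 0 <= eta -> 0 <= v ->
  (forall lam, 0 < lam -> psi lam <= lam ^+ 2 * v / 2 + lam * L) ->
  (ereal_inf [set ((eta + psi lam) / lam)%:E | lam in [set l : R | (0 < l)%R]]
     <= (Num.sqrt (2 * eta * v) + L)%:E)%E.
Proof.
move=> eta_ge0 v_ge0 psi_le; apply/lee_addgt0Pr => e e_gt0.
have [lam lam_gt0 lam_opt] := exists_pos_div_add_mul_le _ _ _ eta_ge0 v_ge0 e_gt0.
apply: le_trans (ereal_inf_lbound _) _; first by exists lam.
have := ler_wpM2r (ltW lam_gt0) lam_opt.
rewrite mulrDl divfK ?gt_eqF // -EFinD lee_fin ler_pdivrMr //.
by have := psi_le _ lam_gt0; nra.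
Qed.

End real_inequalities.

Section gaussian_integrals.
Context {R : realType}.

Lemma integral_normal_prob (m s : R) (f : R -> \bar R) :
  (forall x, 0 <= f x)%E -> measurable_fun setT f ->
  (\int[normal_prob m s]_x f x = \int[lebesgue_measure]_x (f x * (normal_pdf m s x)%:E))%E.
Proof.
move=> f_ge0 mf; have dom := normal_prob_dominates m s.
have mpdf : measurable_fun setT (EFin \o normal_pdf m s).
  by apply/measurable_EFinP; exact: measurable_normal_pdf.
rewrite -(Radon_Nikodym_SigmaFinite.change_of_variables dom) //.
apply: ae_eq_integral => //.
- apply: emeasurable_funM => //.
  exact: measurable_int (Radon_Nikodym_SigmaFinite.f_integrable dom).
- exact: emeasurable_funM.
- apply: ae_eqe_mul2l; apply: integral_ae_eq => //.
  + exact: Radon_Nikodym_SigmaFinite.f_integrable dom.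
  + by move=> E _ mE; rewrite -Radon_Nikodym_SigmaFinite.f_integral.
Qed.

Lemma normal_mgf (m s a b : R) : s != 0 ->
  \int[normal_prob m s]_(x in [set: R]) expR (a + b * x) =
  expR (a + b * m + b ^+ 2 * s ^+ 2 / 2).
Proof.
move=> s_neq0; rewrite /Rintegral integral_normal_prob //; last first.
  by apply/measurable_EFinP; apply: measurableT_comp => //; exact: measurable_funD.
(* completing the square shifts the mean of the density by b s^2 *)
have tilt x : ((expR (a + b * x))%:E * (normal_pdf m s x)%:E =
    (expR (a + b * m + b ^+ 2 * s ^+ 2 / 2))%:E * (normal_pdf (m + b * s ^+ 2) s x)%:E)%E.
  rewrite -!EFinM /normal_pdf (negbTE s_neq0) /normal_fun mulrCA -expRD mulrCA -expRD.
  by congr (_ * expR _)%:E; rewrite -mulr_natr; field.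
under eq_integral => x _ do rewrite tilt.
rewrite ge0_integralZl //.
- by rewrite integral_normal_pdf mule1.
- by apply/measurable_EFinP; exact: measurable_normal_pdf.
- by move=> x _; rewrite lee_fin normal_pdf_ge0.
Qed.

Lemma RintegralN d (T : measurableType d) (mu : {measure set T -> \bar R})
    (D : set T) (f : T -> R) :
  \int[mu]_(x in D) - f x = - \int[mu]_(x in D) f x.
Proof.
rewrite /Rintegral; under eq_integral => x _ do rewrite EFinN.
rewrite integralE [in RHS]integralE funeposN funenegN.
by case: (\int[mu]_(x in D) _)%E (\int[mu]_(x in D) _)%E => [a| |] [b| |] //=;
  rewrite ?opprB ?oppr0.
Qed.

End gaussian_integrals.

Section gaussian_mean_estimation.
Context {R : realType}.
Variables (n : nat) (sigma zm zp : R).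
Hypotheses (n_ge2 : (2 <= n)%N) (sigma_gt0 : 0 < sigma).

Let n_gt0 : 0 < n%:R :> R.
Proof. by rewrite ltr0n (leq_trans _ n_ge2). Qed.

Let gauss_sd_neq0 : sigma * Num.sqrt (n.-1)%:R != 0.
Proof.
by rewrite mulf_neq0 ?gt_eqF // sqrtr_gt0 ltr0n -ltnS prednK // (leq_trans _ n_ge2).
Qed.

Let M := Num.max (zp ^+ 2) (zm ^+ 2).

Let shift (lam x : R) := lam * ((zp - zm) * (2 * x / n%:R - (zm + zp))).

Definition variance_proxy : R :=
  (zp ^+ 2 - zm ^+ 2) ^+ 2 + 4 * sigma ^+ 2 * (zp - zm) ^+ 2 / n%:R.

Lemma zsel_N1 : zsel zm zp (-1) = zm.
Proof. by rewrite /zsel lt_eqF //; lra. Qed.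

Lemma zsel_1 : zsel zm zp 1 = zp.
Proof. by rewrite /zsel eqxx. Qed.

Lemma GtilE rt w : Gtil zm zp rt w = rt * ((zp - zm) * (2 * w - (zm + zp))).
Proof. by rewrite /Gtil /loss; ring. Qed.

Lemma condE_signed (g : R -> R) : condE n sigma zm zp (fun rt w => rt * g w) = 0.
Proof.
have signN r :
    \int[normal_prob 0 (sigma * Num.sqrt (n.-1)%:R)]_(s in [set: R]) (-1 * g (Wval n zm zp r s)) =
  - \int[normal_prob 0 (sigma * Num.sqrt (n.-1)%:R)]_(s in [set: R]) (1 * g (Wval n zm zp r s)).
  by rewrite -RintegralN; apply: eq_Rintegral => s _; rewrite mulN1r mul1r.
by rewrite /condE !big_cons !big_nil !signN; ring.
Qed.

Lemma integral_expR_Gtil lam rt x : rt ^+ 2 = 1 ->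
  \int[normal_prob 0 (sigma * Num.sqrt (n.-1)%:R)]_(s in [set: R])
     expR (lam * Gtil zm zp rt ((x + s) / n%:R)) =
  expR (rt * shift lam x + 2 * lam ^+ 2 * (zp - zm) ^+ 2 * sigma ^+ 2 * (n.-1)%:R / n%:R ^+ 2).
Proof.
move=> rt_sqr.
have affine s : lam * Gtil zm zp rt ((x + s) / n%:R) =
    rt * shift lam x + 2 * lam * rt * (zp - zm) / n%:R * s.
  by rewrite GtilE /shift; field; rewrite gt_eqF.
under eq_Rintegral do rewrite affine.
rewrite normal_mgf // mulr0 addr0; congr (expR (_ + _)).
by rewrite !exprMn sqr_sqrtr ?ler0n // rt_sqr; field; rewrite gt_eqF.
Qed.

Lemma condE_expR_Gtil lam :
  condE n sigma zm zp (fun rt w => expR (lam * Gtil zm zp rt w)) =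
  expR (2 * lam ^+ 2 * (zp - zm) ^+ 2 * sigma ^+ 2 * (n.-1)%:R / n%:R ^+ 2) *
  ((cosh (shift lam zm) + cosh (shift lam zp)) / 2).
Proof.
rewrite /condE !big_cons !big_nil /Wval zsel_N1 zsel_1 /cosh.
by rewrite !integral_expR_Gtil ?sqrrN ?expr1n // !mulN1r !mul1r !expRD; field.
Qed.

Lemma cosh_shift_le lam x : 0 <= lam -> x ^+ 2 <= M ->
  cosh (shift lam x) <= expR (lam ^+ 2 * (zp ^+ 2 - zm ^+ 2) ^+ 2 / 2 + lam * (4 * M / n%:R)).
Proof.
move=> lam_ge0 xM.
have zpM : zp ^+ 2 <= M by rewrite le_max lexx.
have zmM : zm ^+ 2 <= M by rewrite le_max lexx orbT.
set a := lam * (zp ^+ 2 - zm ^+ 2); set b := lam * (2 * (zp - zm) * x / n%:R).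
have -> : shift lam x = - a + b by rewrite /shift /a /b; field; rewrite gt_eqF.
have b_le : `|b| <= lam * (4 * M / n%:R).
  rewrite /b normrM ger0_norm // ler_wpM2l // normrM normfV.
  rewrite [`|n%:R|]ger0_norm ?ler0n // ler_pM2r ?invr_gt0 //.
  have := sqr_ge0 (zp - x); have := sqr_ge0 (zm + x).
  have := sqr_ge0 (zp + x); have := sqr_ge0 (zm - x).
  by move=> *; apply/ler_normlP; split; nra.
have cosh_a := cosh_le_expR_sqr (- a); rewrite sqrrN exprMn in cosh_a.
apply: le_trans (cosh_addr_le _ _) _.
by rewrite addrC expRD ler_pM ?expR_ge0 ?(ltW (cosh_gt0 _)) // ler_expR.
Qed.

Lemma pred_div_sqr_le_inv : (n.-1)%:R / n%:R ^+ 2 <= n%:R^-1 :> R.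
Proof.
rewrite ler_pdivrMr ?exprn_gt0 // expr2 mulrA mulVf ?gt_eqF // mul1r.
by rewrite ler_nat leq_pred.
Qed.

Lemma psiG_le lam : 0 <= lam ->
  psiG n sigma zm zp lam <= lam ^+ 2 * variance_proxy / 2 + lam * (4 * M / n%:R).
Proof.
move=> lam_ge0.
have zpM : zp ^+ 2 <= M by rewrite le_max lexx.
have zmM : zm ^+ 2 <= M by rewrite le_max lexx orbT.
rewrite /psiG (condE_signed (fun w => loss w zm - loss w zp)).
have -> : (fun rt w => expR (lam * (Gtil zm zp rt w - 0))) =
          (fun rt w => expR (lam * Gtil zm zp rt w)).
  by apply/funext => rt; apply/funext => w; rewrite subr0.
rewrite condE_expR_Gtil.
have cosh_zm := cosh_shift_le lam zm lam_ge0 zmM.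
have cosh_zp := cosh_shift_le lam zp lam_ge0 zpM.
set K := 2 * _ * _ * _ * _ / _; set A := _ ^+ 2 * _ / 2 + _ in cosh_zm cosh_zp.
rewrite -ler_expR lnK; last first.
  by rewrite posrE mulr_gt0 ?expR_gt0 ?divr_gt0 ?addr_gt0 ?cosh_gt0.
apply: (@le_trans _ _ (expR K * expR A)).
  by rewrite ler_wpM2l ?expR_ge0 //; lra.
rewrite -expRD ler_expR.
have K_le : K <= 2 * lam ^+ 2 * (zp - zm) ^+ 2 * sigma ^+ 2 / n%:R.
  rewrite /K -mulrA ler_wpM2l ?pred_div_sqr_le_inv //.
  by rewrite mulr_ge0 ?sqr_ge0 // mulr_ge0 ?sqr_ge0 // mulr_ge0 ?sqr_ge0.
by rewrite /A /variance_proxy; lra.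
Qed.

Lemma psi_star_inv_le eta : 0 <= eta ->
  (psi_star_inv n sigma zm zp eta <=
   (Num.sqrt (2 * eta * variance_proxy) + 4 * M / n%:R)%:E)%E.
Proof.
move=> eta_ge0; apply: ereal_inf_chernoff_le => // [|lam /ltW]; last exact: psiG_le.
by rewrite /variance_proxy addr_ge0 ?sqr_ge0 // divr_ge0 ?ler0n //
  mulr_ge0 ?sqr_ge0 // mulr_ge0 ?sqr_ge0.
Qed.

Lemma sqrt_variance_proxy_le_asym eta : 0 <= eta -> `|zp| != `|zm| ->
  Num.sqrt (2 * eta * variance_proxy) <=
  `|zp ^+ 2 - zm ^+ 2| * Num.sqrt (2 * eta)
  + 2 * sigma ^+ 2 * (zp - zm) ^+ 2 / (n%:R * `|zp ^+ 2 - zm ^+ 2|) * Num.sqrt (2 * eta).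
Proof.
move=> eta_ge0 zpm_neq; set p := zp ^+ 2 - zm ^+ 2.
have p_gt0 : 0 < `|p|.
  rewrite normr_gt0 subr_eq0; apply: contra zpm_neq => /eqP sqr_eq.
  by rewrite -[`|zp|]sqrtr_sqr sqr_eq sqrtr_sqr.
set Q := 2 * sigma ^+ 2 * (zp - zm) ^+ 2 / n%:R.
have Q_ge0 : 0 <= Q by rewrite divr_ge0 ?ler0n // mulr_ge0 ?sqr_ge0 // mulr_ge0 ?sqr_ge0.
have -> : `|p| * Num.sqrt (2 * eta) + 2 * sigma ^+ 2 * (zp - zm) ^+ 2 / (n%:R * `|p|) *
    Num.sqrt (2 * eta) = Num.sqrt (2 * eta) * (`|p| + Q / `|p|).
  by rewrite /Q; field; rewrite !gt_eqF.
rewrite sqrtrM ?mulr_ge0 // ler_wpM2l ?sqrtr_ge0 //; apply: sqrtr_le.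
  by rewrite addr_ge0 // divr_ge0 // ltW.
have -> : (`|p| + Q / `|p|) ^+ 2 = p ^+ 2 + 2 * Q + (Q / `|p|) ^+ 2.
  by rewrite sqrrD real_normK ?num_real //; field; rewrite gt_eqF.
have -> : variance_proxy = p ^+ 2 + 2 * Q by rewrite /variance_proxy /p /Q; ring.
by rewrite lerDl sqr_ge0.
Qed.

Lemma sqrt_variance_proxy_le_sym eta : 0 <= eta -> `|zp| = `|zm| ->
  Num.sqrt (2 * eta * variance_proxy) <= 4 * sigma * Num.sqrt (2 * eta / n%:R) * `|zp|.
Proof.
move=> eta_ge0 zpm_eq.
have sqr_eq : zp ^+ 2 = zm ^+ 2 by rewrite -real_normK ?num_real // zpm_eq real_normK ?num_real.
have -> : 2 * eta * variance_proxy = 2 * eta / n%:R * (4 * sigma ^+ 2 * (zp - zm) ^+ 2).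
  by rewrite /variance_proxy sqr_eq subrr expr0n /= add0r; field; rewrite gt_eqF.
have -> : 4 * sigma * Num.sqrt (2 * eta / n%:R) * `|zp| =
    Num.sqrt (2 * eta / n%:R) * (4 * sigma * `|zp|) by ring.
rewrite sqrtrM ?divr_ge0 ?mulr_ge0 ?ler0n // ler_wpM2l ?sqrtr_ge0 //.
rewrite sqrtr_le ?mulr_ge0 ?(ltW sigma_gt0) //.
rewrite !exprMn real_normK ?num_real //.
have := sqr_ge0 (zp + zm); have := sqr_ge0 sigma; nra.
Qed.

End gaussian_mean_estimation.

Theorem lemma5 (R : realType) (n : nat) (sigma eta zm zp : R) :
  (2 <= n)%N -> 0 < sigma -> 0 <= eta ->
  (`|zp| != `|zm| ->
     (psi_star_inv n sigma zm zp eta <=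
      (`|zp ^+ 2 - zm ^+ 2| * Num.sqrt (2 * eta)
       + 2 * sigma ^+ 2 * (zp - zm) ^+ 2 / (n%:R * `|zp ^+ 2 - zm ^+ 2|)
         * Num.sqrt (2 * eta)
       + 4 * Num.max (zp ^+ 2) (zm ^+ 2) / n%:R)%:E)%E) /\
  (`|zp| = `|zm| ->
     (psi_star_inv n sigma zm zp eta <=
      (4 * sigma * Num.sqrt (2 * eta / n%:R) * `|zp|
       + 4 * Num.max (zp ^+ 2) (zm ^+ 2) / n%:R)%:E)%E).
Proof.
move=> n_ge2 sigma_gt0 eta_ge0.
have chernoff := psi_star_inv_le n sigma zm zp n_ge2 sigma_gt0 eta eta_ge0.
split => [zpm_neq|zpm_eq]; apply: le_trans chernoff _; rewrite lee_fin lerD2r.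
- exact: sqrt_variance_proxy_le_asym.
- exact: sqrt_variance_proxy_le_sym.
Qed.
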